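(* If $f:\{0,1\}^n\to\{0,1\}$ is a monotone Boolean function, then $\max\{\mathsf N(f)^2,\mathsf N(\overline f)^2\}\ge\Omega(s(f))$.
   Context: $\mathsf N(f)$ is the minimum degree of a real polynomial $p$ with $|p(x)|\le1/3$ whenever $f(x)=0$ and $|p(x)|\ge1$ whenever $f(x)=1$; $\overline f=1-f$. $f$ is monotone if it is monotonically increasing or decreasing in the coordinatewise order. $s(f)$ is the sensitivity of $f$: the maximum over $x$ of the number of $i\in[n]$ with $f(x)\neq f(x^{\{i\}})$, where $x^{\{i\}}$ is $x$ with bit $i$ flipped. Constants are absolute. *)

From HB Require Import structures.
From mathcomp Require Import all_boot all_order all_algebra.
From mathcomp Require Import reals.
From mathcomp Require Import mpoly.
Set Implicit Arguments. Unset Strict Implicit. Unset Printing Implicit Defensive.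
Import Order.TTheory GRing.Theory Num.Theory.
Local Open Scope ring_scope.

Definition cube (n : nat) := {ffun 'I_n -> bool}.

Definition fneg (n : nat) (f : cube n -> bool) : cube n -> bool := fun x => ~~ f x.

Definition flip (n : nat) (x : cube n) (i : 'I_n) : cube n :=
  [ffun j => if j == i then ~~ x j else x j].

Definition sens (n : nat) (f : cube n -> bool) : nat :=
  \max_(x : cube n) #|[set i : 'I_n | f x != f (flip x i)]|.

Definition cube_le (n : nat) (x y : cube n) : bool := [forall i, x i ==> y i].

Definition monotone (n : nat) (f : cube n -> bool) : Prop :=
  (forall x y, cube_le x y -> f x <= f y)%N \/
  (forall x y, cube_le x y -> f y <= f x)%N.

(* total degree of a multivariate polynomial (msize p = 1 + degree, 0 for p = 0) *)
Definition mdegree (R : nzRingType) (n : nat) (p : {mpoly R[n]}) : nat := (msize p).-1.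

Definition embed (R : nzRingType) (n : nat) (x : cube n) : 'I_n -> R := fun i => (x i)%:R.

Definition nrep (R : realType) (n : nat) (f : cube n -> bool) (p : {mpoly R[n]}) : Prop :=
  forall x : cube n,
    if f x then 1 <= `|p.@[embed R x]| else `|p.@[embed R x]| <= 3^-1.

Definition is_N (R : realType) (n : nat) (f : cube n -> bool) (d : nat) : Prop :=
  (exists p : {mpoly R[n]}, nrep f p /\ mdegree p = d) /\
  (forall p : {mpoly R[n]}, nrep f p -> (d <= mdegree p)%N).

From HB Require Import structures.
From mathcomp Require Import all_boot all_order all_algebra.
From mathcomp Require Import reals.
From mathcomp Require Import mpoly.
From mathcomp Require Import zify ring lra.
Import Order.TTheory GRing.Theory Num.Theory.
Set Implicit Arguments. Unset Strict Implicit. Unset Printing Implicit Defensive.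

(* Let x be an input of maximal sensitivity and S its set of sensitive
   coordinates.  Monotonicity forces f to take the value ~~ f x after flipping
   any nonempty subset of S, so f or its complement is, on these flips of x,
   the indicator of the empty flip.  Averaging a polynomial p that represents
   it over the flips of k coordinates of S gives a univariate polynomial P
   with deg P <= deg p, |P 0| >= 1 and |P k| <= 1/3 for 1 <= k <= |S|.
   If deg P <= m with 4 m^2 <= |S|, the Lagrange identity
   sum_t P t / prod_(u <> t) (t - u) = 0 on the m + 2 nodes 0, 1, 4, ..., 4 m^2
   is violated: the weights at 1 and at 4 j^2 are at most (2m+1)/(m+1) and
   2/(4j^2-1) times the weight at 0, and these ratios sum to less than 3.
   Hence |S| <= 4 (deg p)^2. *)

Lemma wallis_prod_le m :
  m.+1 * \prod_(1 <= j < m.+1) (4 * j ^ 2)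
    <= (2 * m).+1 * \prod_(1 <= j < m.+1) (4 * j ^ 2 - 1).
Proof.
elim: m => [|m IH]; first by rewrite !big_geq.
rewrite big_nat_recr //= [X in _ <= _ * X]big_nat_recr //=.
set A := \prod_(1 <= j < m.+1) (4 * j ^ 2); set B := \prod_(1 <= j < m.+1) (4 * j ^ 2 - 1).
have -> : 4 * m.+1 ^ 2 - 1 = (2 * m).+1 * (2 * m + 3) by nia.
have -> : m.+2 * (A * (4 * m.+1 ^ 2)) = m.+1 * A * (4 * m.+1 * m.+2) by ring.
have -> : (2 * m.+1).+1 * (B * ((2 * m).+1 * (2 * m + 3)))
          = (2 * m).+1 * B * (2 * m + 3) ^ 2.
  by rewrite (_ : (2 * m.+1).+1 = 2 * m + 3); [ring | lia].
by apply: leq_mul => //; nia.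
Qed.

Lemma prod_sub_fact i : \prod_(1 <= j < i) (i - j) = i.-1`!.
Proof.
case: i => [|i]; first by rewrite big_geq.
rewrite big_nat_rev fact_prod /=.
by apply: eq_big_nat => j /andP[j1 ji]; lia.
Qed.

Lemma prod_add_fact i : i`! * \prod_(1 <= j < i) (i + j) = (2 * i).-1`!.
Proof.
case: i => [|i]; first by rewrite big_geq.
rewrite (fact_split (_ : i.+1 <= (2 * i.+1).-1)); last by lia.
congr (_ * _); rewrite (_ : (2 * i.+1).-1.+1 = i.+2 + i); last by lia.
rewrite -{1}[i.+2]add0n big_addn addKn big_add1 /=.
by apply: eq_bigr => j _; lia.
Qed.

Lemma prod_sqr_sub_fact i : 0 < i ->
  2 * i ^ 2 * \prod_(1 <= j < i) (i ^ 2 - j ^ 2) = (2 * i)`!.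
Proof.
move=> i_gt0.
rewrite (eq_big_nat _ _ (F2 := fun j => (i - j) * (i + j))); last first.
  by move=> j /andP[_ ji]; nia.
rewrite big_split /= prod_sub_fact.
have fact_pred n : 0 < n -> n`! = n * n.-1`! by case: n.
rewrite [(2 * i)`!]fact_pred; last by lia.
by rewrite -prod_add_fact (fact_pred i) //; ring.
Qed.

Lemma prod_dist_sqr i m : 0 < i <= m ->
  2 * i ^ 2 * \prod_(1 <= j < m.+1 | j != i) `|i ^ 2 - j ^ 2| = (m - i)`! * (m + i)`!.
Proof.
case/andP=> i_gt0 /subnK <-; elim: (m - i) => [|d IHd].
  rewrite add0n subnn addnn -mul2n -prod_sqr_sub_fact // fact0 mul1n.
  rewrite big_mkcond big_nat_recr //= eqxx muln1 -big_mkcond /=.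
  congr (_ * _); rewrite big_nat_cond [RHS]big_nat_cond.
  apply: eq_big => [j | j /andP[/andP[_ ji] _]]; last by nia.
  by rewrite andbT; case: (ltnP j i) => ji; rewrite ?andbF ?andbT //; lia.
rewrite addSn big_mkcond big_nat_recr //= -big_mkcond /= mulnA IHd.
rewrite ifT; last by lia.
rewrite (_ : d.+1 + i - i = (d + i - i).+1); last by lia.
rewrite (_ : (d + i).+1 + i = (d + i + i).+1); last by lia.
by rewrite !factS; nia.
Qed.

Lemma fact_sqr_le i m : i <= m -> m`! * m`! <= (m - i)`! * (m + i)`!.
Proof.
elim: i => [|i IHi] im; first by rewrite subn0 addn0.
apply: (leq_trans (IHi (ltnW im))).
rewrite (_ : m - i = (m - i.+1).+1); last by lia.
rewrite addnS !factS mulnCA mulnA.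
by apply: leq_mul => //; apply: leq_mul => //; lia.
Qed.

Lemma prod_sqr_le_prod_dist i m : 0 < i <= m ->
  (\prod_(1 <= j < m.+1 | j != i) j) ^ 2
    <= 2 * \prod_(1 <= j < m.+1 | j != i) `|i ^ 2 - j ^ 2|.
Proof.
move=> im; have /andP[i_gt0 le_im] := im.
have iA : i * \prod_(1 <= j < m.+1 | j != i) j = m`!.
  by rewrite fact_prod [in RHS](bigD1_seq i) ?iota_uniq // mem_index_iota; lia.
rewrite -(leq_pmul2l (_ : 0 < i ^ 2)) ?expn_gt0 ?i_gt0 // -expnMn iA.
by rewrite mulnA [i ^ 2 * 2]mulnC prod_dist_sqr // -mulnn fact_sqr_le.
Qed.

Definition gap_node (k : nat) : nat := if k is j.+2 then 4 * j.+1 ^ 2 else k.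

Definition node_prod (m k : nat) : nat :=
  \prod_(0 <= j < m.+2 | j != k) `|gap_node k - gap_node j|.

Lemma gap_node_inj : injective gap_node.
Proof. by case=> [|[|a]] [|[|b]] //= /eqP; rewrite ?eqn_mul2l ?eqn_exp2r //; lia. Qed.

Lemma big_nat_recl2 (R : Type) (idx : R) (op : Monoid.law idx) m (F : nat -> R) :
  \big[op/idx]_(0 <= k < m.+2) F k
    = op (F 0) (op (F 1) (\big[op/idx]_(1 <= j < m.+1) F j.+1)).
Proof. by rewrite big_add1 !big_nat_recl. Qed.

Lemma node_prod_gt0 m k : 0 < node_prod m k.
Proof.
apply: prodn_cond_gt0 => j jk; rewrite absz_gt0 subr_eq0 eqz_nat.
by rewrite (inj_eq gap_node_inj) eq_sym.
Qed.

Lemma node_prod0 m : node_prod m 0 = \prod_(1 <= j < m.+1) (4 * j ^ 2).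
Proof.
rewrite /node_prod big_mkcond big_nat_recl2 /= !mul1n.
by apply: eq_big_nat => -[|j] //= _; lia.
Qed.

Lemma node_prod1 m : node_prod m 1 = \prod_(1 <= j < m.+1) (4 * j ^ 2 - 1).
Proof.
rewrite /node_prod big_mkcond big_nat_recl2 /= !mul1n.
by apply: eq_big_nat => -[|j] //= _; lia.
Qed.

Lemma node_prod_sqr m i : 0 < i <= m ->
  node_prod m i.+1
    = 4 * i ^ 2 * (4 * i ^ 2 - 1) * \prod_(1 <= j < m.+1 | j != i) (4 * `|i ^ 2 - j ^ 2|).
Proof.
case: i => [|i] // _; rewrite /node_prod big_mkcond big_nat_recl2 /= addn0 mulnA.
congr (_ * _); rewrite [RHS]big_mkcond; apply: eq_big_nat => -[|j] //= _.
by rewrite !eqSS; case: eqP => //= _; move: (i.+1 ^ 2) (j.+1 ^ 2) => a b; lia.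
Qed.

Lemma node_prod_ratio1 m : m.+1 * node_prod m 0 <= (2 * m).+1 * node_prod m 1.
Proof. by rewrite node_prod0 node_prod1 wallis_prod_le. Qed.

Lemma node_prod_ratio_sqr m i : 0 < i <= m ->
  (4 * i ^ 2 - 1) * node_prod m 0 <= 2 * node_prod m i.+1.
Proof.
move=> im; have i_in : i \in index_iota 1 m.+1 by rewrite mem_index_iota; lia.
rewrite node_prod0 node_prod_sqr // (bigD1_seq i) ?iota_uniq //=.
under eq_bigr do rewrite -mulnn mulnA.
rewrite !big_split /=.
set C := \prod_(1 <= j < m.+1 | j != i) 4; set A := \prod_(1 <= j < m.+1 | j != i) j.
set B := \prod_(1 <= j < m.+1 | j != i) `|i ^ 2 - j ^ 2|.
have -> : (4 * i ^ 2 - 1) * (4 * i ^ 2 * (C * A * A))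
          = (4 * i ^ 2 - 1) * (4 * i ^ 2) * C * A ^ 2 by rewrite -mulnn; ring.
have -> : 2 * (4 * i ^ 2 * (4 * i ^ 2 - 1) * (C * B))
          = (4 * i ^ 2 - 1) * (4 * i ^ 2) * C * (2 * B) by ring.
by rewrite leq_mul2l prod_sqr_le_prod_dist ?orbT.
Qed.

Lemma mul_bin_bin s k j : j <= k -> 'C(s, k) * 'C(k, j) = 'C(s, j) * 'C(s - j, k - j).
Proof.
move=> jk; case: (leqP k s) => ks; last first.
  rewrite (bin_small ks) mul0n; case: (ltnP s j) => [/bin_small -> // | js].
  by rewrite [X in _ * X]bin_small ?muln0 //; lia.
have js : j <= s by lia.
apply/eqP; rewrite -(eqn_pmul2r (_ : 0 < j`! * (k - j)`! * (s - k)`!)); last first.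
  by rewrite !muln_gt0 !fact_gt0.
have := @bin_fact (s - j) (k - j) (leq_sub2r j ks).
rewrite (_ : s - j - (k - j) = s - k); last by lia.
move=> fact_sj; apply/eqP.
transitivity ('C(s, k) * ('C(k, j) * (j`! * (k - j)`!)) * (s - k)`!); first by ring.
by rewrite bin_fact // -mulnA (bin_fact ks) -(bin_fact js) -fact_sj; ring.
Qed.

(* Multiplied out, since 'C(#|S| - #|J|, k - #|J|) is wrong when k < #|J|. *)
Lemma card_draws_supset (T : finType) (S J : {set T}) k : J \subset S ->
  #|[set z : {set T} | [&& z \subset S, #|z| == k & J \subset z]]| * 'C(#|S|, #|J|)
    = 'C(#|S|, k) * 'C(k, #|J|).
Proof.
move=> JS; case: (ltnP k #|J|) => kJ.
  rewrite [X in _ = _ * X]bin_small // muln0; apply/eqP; rewrite muln_eq0 cards_eq0.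
  apply/orP; left; apply/eqP/setP => z; rewrite !inE.
  apply/negP => /and3P[_ /eqP zk Jz].
  by have := subset_leq_card Jz; rewrite zk leqNgt kJ.
rewrite mul_bin_bin // mulnC; congr (_ * _).
rewrite -cardsDS // -cards_draws -(@card_in_imset _ _ (fun z => z :\: J)).
  apply: eq_card => w; apply/imsetP/idP.
    case=> z; rewrite inE => /and3P[zS /eqP zk Jz] ->.
    by rewrite inE setSD //= cardsDS // zk.
  rewrite inE subsetD => /andP[/andP[wS dwJ] /eqP wk]; exists (w :|: J).
    rewrite inE subUset wS JS subsetUr andbT /=.
    by rewrite cardsU (disjoint_setI0 dwJ) cards0 subn0 wk; apply/eqP; lia.
  by rewrite setDUl setDv setU0 (setDidPl dwJ).
move=> z1 z2; rewrite !inE => /and3P[_ _ J1] /and3P[_ _ J2] e.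
by rewrite -(setID z1 J) -(setID z2 J) (setIidPr J1) (setIidPr J2) e.
Qed.

Definition flip_set (n : nat) (x : cube n) (z : {set 'I_n}) : cube n :=
  [ffun i => x i (+) (i \in z)].

Definition sens_set (n : nat) (f : cube n -> bool) (x : cube n) : {set 'I_n} :=
  [set i | f x != f (flip x i)].

Section FlipSet.
Variable n : nat.
Implicit Types (x : cube n) (z : {set 'I_n}).

Lemma flip_set0 x : flip_set x set0 = x.
Proof. by apply/ffunP => i; rewrite ffunE in_set0 addbF. Qed.

Lemma flip_set1 x i : flip_set x [set i] = flip x i.
Proof. by apply/ffunP => j; rewrite !ffunE in_set1; case: eqP; rewrite ?addbT ?addbF. Qed.

Lemma cube_le_flip_set x z1 z2 : z1 \subset z2 -> {in z2, forall j, x j} ->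
  cube_le (flip_set x z2) (flip_set x z1).
Proof.
move=> /subsetP z12 x_z2; apply/forallP => i; rewrite !ffunE.
case: (boolP (i \in z1)) => [i1 | _]; first by rewrite (z12 _ i1) (x_z2 _ (z12 _ i1)).
by case: (boolP (i \in z2)) => [/x_z2 -> | _]; rewrite ?addbF ?implybb.
Qed.

Lemma cube_le_flip_setN x z1 z2 : z1 \subset z2 -> {in z2, forall j, ~~ x j} ->
  cube_le (flip_set x z1) (flip_set x z2).
Proof.
move=> /subsetP z12 x_z2; apply/forallP => i; rewrite !ffunE.
case: (boolP (i \in z1)) => [i1 | _]; first by rewrite (z12 _ i1) implybb.
by case: (boolP (i \in z2)) => [/x_z2 /negPf -> | _]; rewrite ?addbF ?implybb.
Qed.

Lemma sens_set_fneg (f : cube n -> bool) x : sens_set (fneg f) x = sens_set f x.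
Proof. by apply/setP => i; rewrite !inE /fneg; case: (f x); case: (f _). Qed.

Lemma sens_attained (f : cube n -> bool) : exists x, sens f = #|sens_set f x|.
Proof.
have [|x max_x] := bigop.eq_bigmax (fun x => #|sens_set f x|); last by exists x.
by apply/card_gt0P; exists [ffun=> false].
Qed.

Section Increasing.
Variable f : cube n -> bool.
Hypothesis f_incr : forall x y, cube_le x y -> f x <= f y.

Lemma sens_set_bit x i : i \in sens_set f x -> x i = f x.
Proof.
have x_i b : x i = b -> {in [set i], forall j, x j = b} by move=> xi j /set1P ->.
rewrite inE -flip_set1; case xi: (x i); case fx: (f x) => //.
  have /f_incr := cube_le_flip_set (sub0set [set i]) (x_i _ xi).
  by rewrite flip_set0 fx; case: (f _).
have /f_incr := cube_le_flip_setN (sub0set [set i]) (fun j jS => introT negPf (x_i _ xi j jS)).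
by rewrite flip_set0 fx; case: (f _).
Qed.

Lemma increasing_flip_sens_set x z :
  z \subset sens_set f x -> z != set0 -> f (flip_set x z) = ~~ f x.
Proof.
move=> /subsetP zS /set0Pn[i iz].
have x_z : {in z, forall j, x j = f x} by move=> j /zS /sens_set_bit.
have i_z : [set i] \subset z by rewrite sub1set.
have := zS i iz; rewrite inE -flip_set1.
case fx: (f x) in x_z *.
  have /f_incr := cube_le_flip_set i_z x_z.
  by case: (f (flip_set x z)); case: (f (flip_set x [set i])).
have /f_incr := cube_le_flip_setN i_z (fun j jz => introT negPf (x_z j jz)).
by case: (f (flip_set x z)); case: (f (flip_set x [set i])).
Qed.
End Increasing.

Lemma monotone_flip_indicator (f : cube n -> bool) x z :
  monotone f -> z \subset sens_set f x ->
  (if f x then f else fneg f) (flip_set x z) = (z == set0).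
Proof.
move=> f_mono zS; have [-> | z_neq0] := eqVneq z set0.
  by rewrite flip_set0 /fneg; case: ifP => ->.
have flip_f : f (flip_set x z) = ~~ f x.
  case: f_mono => [f_incr | f_decr]; first exact: increasing_flip_sens_set.
  have fneg_incr u v : cube_le u v -> fneg f u <= fneg f v.
    by move=> /f_decr; rewrite /fneg; case: (f u); case: (f v).
  have := increasing_flip_sens_set fneg_incr (x := x) (z := z).
  by rewrite sens_set_fneg /fneg => /(_ zS z_neq0) /negb_inj.
by rewrite /fneg; case: (f x) flip_f => /= ->.
Qed.
End FlipSet.

Local Open Scope ring_scope.

Section LagrangeWeight.
Variables (K : fieldType) (n : nat) (x : nat -> K).

Definition lagrange_weight (i : nat) : K := (\prod_(0 <= j < n | j != i) (x i - x j))^-1.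

(* The coefficient of 'X^n.-1 in the Lagrange interpolation formula for p. *)
Lemma sum_lagrange_weight_eq0 (p : {poly K}) : injective x -> (size p < n)%N ->
  \sum_(0 <= i < n) p.[x i] * lagrange_weight i = 0.
Proof.
move=> x_inj sp; have n_gt0 : (0 < n)%N by case: n sp.
have /(congr1 (fun q : {poly K} => q`_n.-1)) := lagrange_gen n_gt0 x_inj (ltnW sp).
rewrite coef_sum nth_default; last by rewrite -ltnS prednK.
rewrite big_mkord => coef_eq; rewrite [RHS]coef_eq.
apply: eq_bigr => i _; rewrite coefCM.
rewrite -[X in _`_X](congr1 predn (size_lagrange_ n_gt0 x_inj i)) -/(lead_coef _).
rewrite lagrangeE //= lead_coef_Mmonic ?monic_prod_XsubC // lead_coefC horner_prod.
rewrite /lagrange_weight big_mkord.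
by under [in RHS]eq_bigr do rewrite hornerXsubC.
Qed.
End LagrangeWeight.

Section GapPolynomial.
Variable R : realFieldType.

Let gap_point (k : nat) : R := (gap_node k)%:R.

Lemma normr_natB (a b : nat) : `|a%:R - b%:R : R| = (`|a - b|%N)%:R.
Proof.
case: (leqP a b) => [ab | /ltnW ba].
  by rewrite distrC -natrB // ger0_norm ?ler0n // distnEr.
by rewrite -natrB // ger0_norm ?ler0n // distnEl.
Qed.

Lemma gap_point_inj : injective gap_point.
Proof. by move=> a b /eqP; rewrite eqr_nat => /eqP /gap_node_inj. Qed.

Lemma norm_gap_weight m k : `|lagrange_weight m.+2 gap_point k| = (node_prod m k)%:R^-1.
Proof.
rewrite normfV normr_prod natr_prod; congr (_^-1).
by apply: eq_bigr => j _; rewrite normr_natB.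
Qed.

Lemma gap_weight_le m k (c d : nat) :
  (0 < d)%N -> (d * node_prod m 0 <= c * node_prod m k)%N ->
  `|lagrange_weight m.+2 gap_point k| <= c%:R / d%:R * `|lagrange_weight m.+2 gap_point 0|.
Proof.
move=> d_gt0 le_dc; rewrite !norm_gap_weight -mulrA -invfM -natrM.
rewrite ler_pdivlMr; last by rewrite ltr0n muln_gt0 d_gt0 node_prod_gt0.
by rewrite mulrC ler_pdivrMr ?ltr0n ?node_prod_gt0 // -natrM ler_nat.
Qed.

Lemma sum_inv_sqr_sub1 m :
  \sum_(1 <= j < m.+1) 2 / (4 * j ^ 2 - 1)%N%:R = (2 * m)%:R / (2 * m).+1%:R :> R.
Proof.
elim: m => [|m IHm]; first by rewrite big_geq // mul0r.
rewrite big_nat_recr //= IHm.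
rewrite (_ : 4 * m.+1 ^ 2 - 1 = (2 * m).+1 * (2 * m.+1).+1)%N; last by nia.
rewrite -[(2 * m.+1).+1]addn1 -[(2 * m).+1]addn1 !natrM !natrD !natrM mulr1n.
have m_ge0 : 0 <= m%:R :> R by rewrite ler0n.
by field; apply/andP; split; rewrite gt_eqF //; lra.
Qed.

Lemma wallis_ratio_lt3 m : (2 * m).+1%:R / m.+1%:R + (2 * m)%:R / (2 * m).+1%:R < 3 :> R.
Proof.
rewrite -[3%:R]/((2 + 1)%N%:R) natrD; apply: ltrD.
  by rewrite ltr_pdivrMr ?ltr0n // -natrM ltr_nat; lia.
by rewrite ltr_pdivrMr ?ltr0n // mul1r ltr_nat.
Qed.

Lemma gap_weights_le m (w := lagrange_weight m.+2 gap_point) :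
  `|w 1| + \sum_(1 <= j < m.+1) `|w j.+1|
    <= ((2 * m).+1%:R / m.+1%:R + (2 * m)%:R / (2 * m).+1%:R) * `|w 0|.
Proof.
rewrite mulrDl; apply: lerD; first exact: gap_weight_le (node_prod_ratio1 m).
rewrite -sum_inv_sqr_sub1 mulr_suml; apply: ler_sum_nat => j /andP[j_gt0 jm].
apply: gap_weight_le; first by lia.
by apply: node_prod_ratio_sqr; rewrite j_gt0.
Qed.

Lemma gap_poly_size m s (P : {poly R}) : (0 < s)%N -> (4 * m ^ 2 <= s)%N ->
  1 <= `|P.[0]| -> (forall k, (0 < k <= s)%N -> `|P.[k%:R]| <= 3^-1) ->
  (m.+2 <= size P)%N.
Proof.
move=> s_gt0 ms P0_ge1 Pk_le; rewrite leqNgt; apply/negP => sP.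
have := sum_lagrange_weight_eq0 gap_point_inj sP.
rewrite big_nat_recl2 /= => /eqP; rewrite addr_eq0 => /eqP sum_eq.
set w := lagrange_weight m.+2 gap_point in sum_eq.
have w0_gt0 : 0 < `|w 0| by rewrite norm_gap_weight invr_gt0 ltr0n node_prod_gt0.
have : `|P.[0]| * `|w 0| <= 3^-1 * (`|w 1| + \sum_(1 <= j < m.+1) `|w j.+1|).
  rewrite -normrM sum_eq normrN mulrDr; apply: (le_trans (ler_normD _ _)); apply: lerD.
    by rewrite normrM ler_wpM2r //; apply: Pk_le; rewrite s_gt0.
  apply: (le_trans (ler_norm_sum _ _ _)); rewrite mulr_sumr.
  apply: ler_sum_nat => -[|j] //= jm; rewrite normrM ler_wpM2r //.
  apply: Pk_le; rewrite /gap_node muln_gt0 expn_gt0 (leq_trans _ ms) //.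
  by rewrite leq_mul2l leq_exp2r //; lia.
have third_ge0 : 0 <= 3^-1 :> R by rewrite invr_ge0.
move=> /le_trans /(_ (ler_wpM2l third_ge0 (gap_weights_le m))).
rewrite mulrA ler_pM2r // => P0_le; move: P0_ge1; apply/negP; rewrite -ltNge.
by apply: (le_lt_trans P0_le); rewrite mulrC ltr_pdivrMr // mul1r wallis_ratio_lt3.
Qed.
End GapPolynomial.

Section BinomialPolynomial.
Variable R : numFieldType.

Definition binomial_poly (j : nat) : {poly R} := j`!%:R^-1 *: \prod_(i < j) ('X - i%:R%:P).

Lemma size_binomial_poly j : (size (binomial_poly j) <= j.+1)%N.
Proof.
apply: (leq_trans (size_scale_leq _ _)).
by rewrite size_prod_XsubC /index_enum unlock -enumT size_enum_ord.
Qed.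

Lemma horner_binomial_poly j k : (binomial_poly j).[k%:R] = 'C(k, j)%:R.
Proof.
rewrite /binomial_poly hornerZ horner_prod.
under eq_bigr do rewrite hornerXsubC.
have -> : \prod_(i < j) (k%:R - i%:R) = (k ^_ j)%:R :> R.
  case: (ltnP k j) => kj.
    rewrite ffact_small //; apply/eqP; rewrite prodf_seq_eq0; apply/hasP.
    by exists (Ordinal kj); rewrite ?mem_index_enum //= subrr.
  rewrite ffact_prod natr_prod; apply: eq_bigr => i _.
  by rewrite natrB //; apply: leq_trans (ltnW (ltn_ord i)) kj.
by rewrite -bin_ffact natrM mulrC mulfK // pnatr_eq0 -lt0n fact_gt0.
Qed.
End BinomialPolynomial.

Section Symmetrization.
Variables (R : numFieldType) (n : nat) (x : cube n) (S : {set 'I_n}).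

Definition level_sum k (F : {set 'I_n} -> R) :=
  \sum_(z : {set 'I_n} | (z \subset S) && (#|z| == k)) F z.

Lemma level_sum0 (F : {set 'I_n} -> R) : level_sum 0 F = F set0.
Proof.
rewrite /level_sum (big_pred1 set0) // => z; rewrite cards_eq0 /= andbC.
by case: eqP => // ->; rewrite sub0set.
Qed.

Lemma norm_level_sum_le k (F : {set 'I_n} -> R) (c : R) :
  (forall z : {set 'I_n}, z \subset S -> #|z| = k -> `|F z| <= c) ->
  `|level_sum k F| <= 'C(#|S|, k)%:R * c.
Proof.
move=> F_le; apply: (le_trans (ler_norm_sum _ _ _)).
apply: (@le_trans _ _ (\sum_(z : {set 'I_n} | (z \subset S) && (#|z| == k)) c)).
  by apply: ler_sum => z /andP[zS /eqP zk]; apply: F_le.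
by rewrite sumr_const -cards_draws [X in _ <= X]mulr_natl cardsE.
Qed.

Definition flip_gain (mm : 'X_{1..n}) i : R := (~~ x i)%:R ^+ mm i - (x i)%:R ^+ mm i.

Definition flip_coef (mm : 'X_{1..n}) (J : {set 'I_n}) : R :=
  \prod_i (if i \in J then flip_gain mm i else (x i)%:R ^+ mm i).

(* At the flip of x by z the monomial mm expands to the sum of the flip_coef mm J
   over J \subset z; of the sets z \subset S of size k, exactly
   'C(#|S|, k) * 'C(k, #|J|) / 'C(#|S|, #|J|) contain J, and 'C(k, #|J|) is the
   value of binomial_poly #|J| at k. *)
Definition sym_monomial (mm : 'X_{1..n}) : {poly R} :=
  \sum_(J : {set 'I_n} | J \subset S)
    (flip_coef mm J / 'C(#|S|, #|J|)%:R) *: binomial_poly R #|J|.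

Definition sym_poly (p : {mpoly R[n]}) : {poly R} :=
  \sum_(mm <- msupp p) p@_mm *: sym_monomial mm.

Lemma flip_coef_eq0 (mm : 'X_{1..n}) (J : {set 'I_n}) :
  ~~ (J \subset [set i | mm i != 0%N]) -> flip_coef mm J = 0.
Proof.
case/subsetPn => i iJ; rewrite inE negbK => /eqP mi.
by rewrite /flip_coef (bigD1 i) //= iJ /flip_gain mi !expr0 subrr mul0r.
Qed.

Lemma size_sym_monomial (mm : 'X_{1..n}) : (size (sym_monomial mm) <= (mdeg mm).+1)%N.
Proof.
apply: (leq_trans (size_sum _ _ _)); apply/bigmax_leqP => J _.
have [Jsupp | /flip_coef_eq0 ->] := boolP (J \subset [set i | mm i != 0%N]); last first.
  by rewrite mul0r scale0r size_poly0.
apply: (leq_trans (size_scale_leq _ _)); apply: (leq_trans (size_binomial_poly _ _)).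
rewrite ltnS mdegE -sum1_card [X in (_ <= X)%N](bigID (mem J)) /=.
apply: leq_trans (leq_addr _ _); apply: leq_sum => i /(subsetP Jsupp).
by rewrite inE lt0n.
Qed.

Lemma size_sym_poly p : (size (sym_poly p) <= msize p)%N.
Proof.
apply: (leq_trans (size_sum _ _ _)); apply/bigmax_leqP_seq => mm mm_p _.
apply: (leq_trans (size_scale_leq _ _)); apply: (leq_trans (size_sym_monomial _)).
exact: msize_mdeg_lt.
Qed.

Lemma flip_set_monomial (mm : 'X_{1..n}) z :
  \prod_i ((flip_set x z i)%:R : R) ^+ mm i
    = \sum_(J : {set 'I_n}) (J \subset z)%:R * flip_coef mm J.
Proof.
have -> : \prod_i ((flip_set x z i)%:R : R) ^+ mm i
          = \prod_i ((i \in z)%:R * flip_gain mm i + (x i)%:R ^+ mm i).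
  apply: eq_bigr => i _; rewrite /flip_set /flip_gain ffunE.
  by case: (i \in z); rewrite ?addbT ?addbF ?mul1r ?mul0r ?add0r ?subrK.
rewrite bigA_distr; apply: eq_bigr => J _.
have [Jz | /subsetPn[i iJ iz]] := boolP (J \subset z); last first.
  by rewrite mul0r (bigD1 i) //= iJ (negPf iz) !mul0r.
rewrite mul1r; apply: eq_bigr => i _; case: ifP => // iJ.
by rewrite (subsetP Jz _ iJ) mul1r.
Qed.

Lemma level_sum_supset (J : {set 'I_n}) k :
  level_sum k (fun z => (J \subset z)%:R)
    = #|[set z : {set 'I_n} | [&& z \subset S, #|z| == k & J \subset z]]|%:R.
Proof.
rewrite /level_sum -sum1dep_card natr_sum big_mkcond [RHS]big_mkcond /=.
by apply: eq_bigr => z _; case: (z \subset S); case: (#|z| == k); case: (J \subset z).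
Qed.

Lemma level_sum_monomial (mm : 'X_{1..n}) k :
  level_sum k (fun z => \prod_i ((flip_set x z i)%:R : R) ^+ mm i)
    = 'C(#|S|, k)%:R * (sym_monomial mm).[k%:R].
Proof.
rewrite /level_sum; under eq_bigr do rewrite flip_set_monomial.
rewrite exchange_big /= /sym_monomial horner_sum mulr_sumr [RHS]big_mkcond /=.
apply: eq_bigr => J _; rewrite -big_distrl /= -/(level_sum k _) level_sum_supset.
have [JS | JnS] := boolP (J \subset S); last first.
  rewrite (_ : [set z | _] = set0) ?cards0 ?mul0r //; apply/setP => z; rewrite !inE.
  by apply/negP => /and3P[zS _ Jz]; move: JnS; rewrite (subset_trans Jz zS).
have C_neq0 : 'C(#|S|, #|J|)%:R != 0 :> R.
  by rewrite pnatr_eq0 -lt0n bin_gt0 subset_leq_card.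
rewrite hornerZ horner_binomial_poly -[X in X * _](mulfK C_neq0) -natrM.
by rewrite card_draws_supset // natrM; field.
Qed.

Lemma level_sum_poly (p : {mpoly R[n]}) k :
  level_sum k (fun z => p.@[embed R (flip_set x z)]) = 'C(#|S|, k)%:R * (sym_poly p).[k%:R].
Proof.
rewrite /level_sum; under eq_bigr do rewrite mevalE.
rewrite exchange_big /= /sym_poly horner_sum mulr_sumr; apply: eq_bigr => mm _.
by rewrite -mulr_sumr hornerZ mulrCA -level_sum_monomial.
Qed.
End Symmetrization.

Lemma flip_indicator_degree (R : realType) n (g : cube n -> bool) (x : cube n)
    (S : {set 'I_n}) (p : {mpoly R[n]}) :
  nrep g p -> (forall z : {set 'I_n}, z \subset S -> g (flip_set x z) = (z == set0)) ->
  (#|S| <= 4 * mdegree p ^ 2)%N.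
Proof.
move=> p_rep g_ind; rewrite leqNgt; apply/negP => S_big.
set P := sym_poly x S p.
have P0_ge1 : 1 <= `|P.[0]|.
  have := level_sum_poly x S p 0; rewrite level_sum0 bin0 mul1r => <-.
  by have := p_rep (flip_set x set0); rewrite g_ind ?sub0set ?eqxx.
have Pk_le k : (0 < k <= #|S|)%N -> `|P.[k%:R]| <= 3^-1.
  case/andP=> k_gt0 kS; have C_gt0 : 0 < 'C(#|S|, k)%:R :> R by rewrite ltr0n bin_gt0.
  rewrite -(ler_pM2l C_gt0) -[X in X * _]normr_nat -normrM -level_sum_poly.
  apply: norm_level_sum_le => z zS zk; have := p_rep (flip_set x z).
  by rewrite g_ind // -cards_eq0 zk gtn_eqF.
have := gap_poly_size (leq_ltn_trans (leq0n _) S_big) (ltnW S_big) P0_ge1 Pk_le.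
have := size_sym_poly x S p; rewrite -/P /mdegree.
by move: (size P) (msize p) => a b; lia.
Qed.

Theorem lemma3p7 (R : realType) :
  exists c : R, 0 < c /\
    forall (n : nat) (f : cube n -> bool), monotone f ->
    forall d0 d1 : nat, is_N R f d0 -> is_N R (fneg f) d1 ->
      c * (sens f)%:R <= (maxn (d0 ^ 2) (d1 ^ 2))%:R.
Proof.
exists 4^-1; split; first by rewrite invr_gt0 ltr0n.
move=> n f f_mono d0 d1 [[p0 [rep0 <-]] _] [[p1 [rep1 <-]] _].
have [x ->] := sens_attained f.
rewrite mulrC ler_pdivrMr ?ltr0n // -natrM ler_nat mulnC.
have indicator (z : {set 'I_n}) : z \subset sens_set f x ->
    (if f x then f else fneg f) (flip_set x z) = (z == set0).
  exact: monotone_flip_indicator.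
case: (f x) in indicator.
  apply: leq_trans (flip_indicator_degree rep0 indicator) _.
  by rewrite leq_mul2l leq_maxl orbT.
apply: leq_trans (flip_indicator_degree rep1 indicator) _.
by rewrite leq_mul2l leq_maxr orbT.
Qed.
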